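(* Suppose $s>1/2$ and $g\in H^s(\mathbb U)$. Then there exists a constant $C_s>0$ such that for all $N,M\ge1$, $$\|\mathcal I_N\mathcal M(g)\mathcal C^+-\mathcal I_N\mathcal M(\mathcal P_Mg)\mathcal C^+\|_s\le C_s\|g-\mathcal P_Mg\|_s,\qquad\|\mathcal P_N\mathcal M(g)\mathcal C^+-\mathcal P_N\mathcal M(\mathcal P_Mg)\mathcal C^+\|_s\le C_s\|g-\mathcal P_Mg\|_s.$$
   Context: $\mathbb U=\{|z|=1\}$. For $u\in L^2(\mathbb U)$, $u(z)=\sum_ju_jz^j$; $H^s(\mathbb U)$ has norm $\|u\|_s^2=c_{|s|}\sum_j|u_j|^2\max\{1,|j|\}^{2s}$ with fixed constants $c_{|s|}>0$ chosen so that $\|uv\|_s\le\|u\|_s\|v\|_s$ for $s>1/2$; $\|\cdot\|_s$ also denotes the operator norm on $H^s(\mathbb U)$. $\mathcal M(g)u=gu$. $\mathcal C^+u=\sum_{j\ge0}u_jz^j$ (boundary value from inside of the Cauchy integral). For $N\ge1$, $N_-=\lfloor N/2\rfloor$, $N_+=\lfloor(N-1)/2\rfloor$, $\mathcal P_Nu=\sum_{j=-N_-}^{N_+}u_jz^j$, and $\mathcal I_Nu=\sum_{j=-N_-}^{N_+}\check u_jz^j$ is the trigonometric interpolant at the nodes $e^{2\pi i(\ell-1)/N}$, $\ell=1,\dots,N$, i.e. $\check u_j=\sum_{p\in\mathbb Z}u_{pN+j}$. *)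

From Stdlib Require Import Reals ZArith.
From Coquelicot Require Import Coquelicot.
Open Scope R_scope.

(* A function u in L^2(U) is represented by its Fourier coefficients u_j, j in Z:
   u(z) = sum_j u_j z^j. *)
Definition fseq := Z -> C.

Definition zpair (f : Z -> C) (n : nat) : C :=
  Cplus (f (Z.of_nat n)) (f (- Z.of_nat (S n))%Z).
Definition zpairR (f : Z -> R) (n : nat) : R :=
  f (Z.of_nat n) + f (- Z.of_nat (S n))%Z.

(* Sum over Z of a complex family (used only for absolutely summable families,
   where it is the usual sum). *)
Definition Zsum (f : Z -> C) : C :=
  (Series (fun n => Re (zpair f n)), Series (fun n => Im (zpair f n))).

Definition hterm (s : R) (u : fseq) (j : Z) : R :=
  (Cmod (u j)) ^ 2 * Rpower (IZR (Z.max 1 (Z.abs j))) (2 * s).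

Definition Hs (s : R) (u : fseq) : Prop := ex_series (zpairR (hterm s u)).

(* ||u||_s (normalisation constant c_{|s|} := 1) *)
Definition hnorm (s : R) (u : fseq) : R := sqrt (Series (zpairR (hterm s u))).

(* Operator norm on H^s(U) (extended real; +oo if A does not map H^s into H^s). *)
Definition opnorm (s : R) (A : fseq -> fseq) : Rbar :=
  Lub_Rbar (fun r => exists u, Hs s u /\ 0 < hnorm s u /\
     (r = hnorm s (A u) / hnorm s u \/ ~ Hs s (A u))).

Definition fsub (u v : fseq) : fseq := fun j => Cminus (u j) (v j).
Definition opsub (A B : fseq -> fseq) : fseq -> fseq := fun u => fsub (A u) (B u).

Definition Mop (g : fseq) (u : fseq) : fseq :=
  fun j => Zsum (fun k => Cmult (g k) (u (j - k)%Z)).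

Definition Cplus_op (u : fseq) : fseq :=
  fun j => if Z.leb 0 j then u j else RtoC 0.

Definition Nminus (N : nat) : Z := (Z.of_nat N / 2)%Z.
Definition Nplus (N : nat) : Z := ((Z.of_nat N - 1) / 2)%Z.
Definition inrange (N : nat) (j : Z) : bool :=
  Z.leb (- Nminus N) j && Z.leb j (Nplus N).

Definition Pop (N : nat) (u : fseq) : fseq :=
  fun j => if inrange N j then u j else RtoC 0.

(* trigonometric interpolant I_N: coefficients check u_j = sum_p u_{pN+j} *)
Definition Iop (N : nat) (u : fseq) : fseq :=
  fun j => if inrange N j then Zsum (fun p => u (p * Z.of_nat N + j)%Z) else RtoC 0.

From Pilot Require Import Defs.
From Stdlib Require Import Reals ZArith List Lia Lra Psatz FunctionalExtensionality.
From Coquelicot Require Import Coquelicot.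
Import ListNotations.
Open Scope R_scope.

(* Both differences equal [Q M(h) C^+] with [h = g - P_M g] and [Q = I_N] or [P_N], because the
   Fourier convolution defining [M] is linear in its symbol (all series involved converge
   absolutely).  [C^+] and [P_N] only delete coefficients.  For [s > 1/2] the constant
   [zeta s = sum_k <k>^(-2s)] is finite, so Cauchy-Schwarz gives [|a|_1^2 <= zeta s |a|_s^2];
   with Peetre's inequality [<m>^s <= 2^s (<k>^s + <m-k>^s)] and Young's inequality this yields
   [|M(h) v|_s^2 <= 4 2^(2s) zeta s |h|_s^2 |v|_s^2].  For [j] in the index range of [I_N] one
   has [<pN + j> >= <p> <j>], so Cauchy-Schwarz on the aliasing sum gives
   [<j>^(2s) |sum_p u_(pN+j)|^2 <= zeta s sum_p <pN+j>^(2s) |u_(pN+j)|^2]; summing over the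
   disjoint residue classes, [|I_N u|_s^2 <= zeta s |u|_s^2]. *)

Lemma sum_n_succ (a : nat -> R) n : sum_n a (S n) = sum_n a n + a (S n).
Proof. exact (sum_Sn a n). Qed.

Lemma sum_n_nonneg_incr (a : nat -> R) n :
  (forall n, 0 <= a n) -> sum_n a n <= sum_n a (S n).
Proof. intros Ha; rewrite sum_n_succ; specialize (Ha (S n)); lra. Qed.

Lemma ex_series_nonneg_bounded (a : nat -> R) B :
  (forall n, 0 <= a n) -> (forall n, sum_n a n <= B) -> ex_series a /\ Series a <= B.
Proof.
  intros Ha HB.
  destruct (ex_finite_lim_seq_incr (sum_n a) B) as [l Hl]; auto.
  { intros n; apply sum_n_nonneg_incr, Ha. }
  split; [exists l; exact Hl|].
  unfold Series; rewrite (is_lim_seq_unique _ _ Hl).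
  exact (is_lim_seq_le _ _ l B HB Hl (is_lim_seq_const B)).
Qed.

Lemma sum_n_le_Series (a : nat -> R) n :
  (forall n, 0 <= a n) -> ex_series a -> sum_n a n <= Series a.
Proof.
  intros Ha He. apply is_lim_seq_incr_compare; [exact (Series_correct a He)|].
  intros k; apply sum_n_nonneg_incr, Ha.
Qed.

(* Also when [a] is not summable: the partial sums then tend to [+oo] and [Series a = 0]. *)
Lemma Series_nonneg (a : nat -> R) : (forall n, 0 <= a n) -> 0 <= Series a.
Proof.
  intros Ha.
  assert (Hlim : ex_lim_seq (sum_n a)) by (apply ex_lim_seq_incr; intros n; apply sum_n_nonneg_incr, Ha).
  unfold Series. destruct (Lim_seq (sum_n a)) as [l| |] eqn:E; simpl; try lra.
  apply (is_lim_seq_le (fun _ => 0) (sum_n a) 0 l); [| apply is_lim_seq_const |].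
  - induction n as [|n IH]; [rewrite sum_O; apply Ha | rewrite sum_n_succ; specialize (Ha (S n)); lra].
  - rewrite <- E; apply Lim_seq_correct, Hlim.
Qed.

(** * Nonnegative series over Z *)

Definition SeriesZ (F : Z -> R) : R := Series (zpairR F).
Definition ex_seriesZ (F : Z -> R) : Prop := ex_series (zpairR F).
Definition nonneg (F : Z -> R) : Prop := forall x, 0 <= F x.

(* A nonnegative [SeriesZ] is the supremum of its finite sums over duplicate-free lists; comparing,
   reindexing and interchanging sums over Z all go through this. *)
Fixpoint sum_list (F : Z -> R) (l : list Z) : R :=
  match l with [] => 0 | x :: l' => F x + sum_list F l' end.

Fixpoint zbox (n : nat) : list Z :=
  match n with
  | O => [0%Z; (-1)%Z]
  | S m => Z.of_nat n :: (- Z.of_nat (S n))%Z :: zbox m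
  end.

Lemma sum_list_app F l1 l2 : sum_list F (l1 ++ l2) = sum_list F l1 + sum_list F l2.
Proof. induction l1; simpl; [ring | rewrite IHl1; ring]. Qed.

Lemma sum_list_nonneg F l : nonneg F -> 0 <= sum_list F l.
Proof. intros H; induction l; simpl; [lra | specialize (H a); lra]. Qed.

Lemma sum_list_ext F G l : (forall x, F x = G x) -> sum_list F l = sum_list G l.
Proof. intros H; induction l; simpl; [auto | rewrite H, IHl; auto]. Qed.

Lemma sum_list_le F G l : (forall x, F x <= G x) -> sum_list F l <= sum_list G l.
Proof. intros H; induction l; simpl; [lra | specialize (H a); lra]. Qed.

Lemma sum_list_scal c F l : sum_list (fun x => c * F x) l = c * sum_list F l.
Proof. induction l; simpl; [ring | rewrite IHl; ring]. Qed.

Lemma sum_list_map F (f : Z -> Z) l : sum_list F (map f l) = sum_list (fun x => F (f x)) l.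
Proof. induction l; simpl; [auto | rewrite IHl; auto]. Qed.

Lemma sum_list_flat_map F (f : Z -> list Z) l :
  sum_list F (flat_map f l) = sum_list (fun x => sum_list F (f x)) l.
Proof. induction l; simpl; [auto | rewrite sum_list_app, IHl; auto]. Qed.

Lemma sum_list_filter F (b : Z -> bool) l :
  sum_list (fun x => if b x then F x else 0) l = sum_list F (filter b l).
Proof. induction l; simpl; [auto | destruct (b a); simpl; rewrite IHl; ring]. Qed.

Lemma sum_list_zbox F n : sum_list F (zbox n) = sum_n (zpairR F) n.
Proof.
  induction n as [|n IH].
  - rewrite sum_O. unfold zpairR; simpl; ring.
  - rewrite sum_n_succ, <- IH. unfold zpairR; simpl; ring.
Qed.

Lemma In_zbox n x : In x (zbox n) <-> (- (Z.of_nat n + 1) <= x <= Z.of_nat n)%Z.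
Proof.
  induction n as [|n IH]; simpl; [split; [intros [H|[H|[]]]; lia | lia] |].
  rewrite IH. split; [intros [H|[H|H]]; lia |].
  intros H. destruct (Z.eq_dec x (Z.of_nat (S n))); [left; lia |].
  destruct (Z.eq_dec x (- Z.of_nat (S (S n)))%Z); [right; left; lia | right; right; lia].
Qed.

Lemma NoDup_zbox n : NoDup (zbox n).
Proof.
  induction n as [|n IH]; simpl.
  - repeat constructor; simpl; lia.
  - constructor; [intros [H|H]; [lia | apply In_zbox in H; lia] |].
    constructor; [intros H; apply In_zbox in H; lia | exact IH].
Qed.

Lemma incl_zbox (L : list Z) : exists n, incl L (zbox n).
Proof.
  induction L as [|a L [n Hn]]; [exists O; intros x [] |].
  exists (Nat.max n (Z.to_nat (Z.abs a))). intros x [<-|H]; rewrite In_zbox; [lia |].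
  apply Hn, In_zbox in H; lia.
Qed.

Lemma sum_list_incl F L L' : nonneg F -> NoDup L -> incl L L' -> sum_list F L <= sum_list F L'.
Proof.
  intros HF HN. revert L'. induction HN as [|a L Ha HN IH]; intros L' Hi.
  - apply sum_list_nonneg, HF.
  - destruct (in_split a L' (Hi a (or_introl eq_refl))) as [A [B ->]].
    assert (HAB : sum_list F L <= sum_list F (A ++ B)).
    { apply IH. intros y Hy. destruct (in_app_or A (a :: B) y (Hi y (or_intror Hy))) as [H|[H|H]];
        apply in_or_app; auto. subst; contradiction. }
    rewrite sum_list_app in *; simpl. lra.
Qed.

Lemma zpairR_nonneg F : nonneg F -> forall n, 0 <= zpairR F n.
Proof. intros H n; unfold zpairR; pose proof (H (Z.of_nat n)); pose proof (H (- Z.of_nat (S n))%Z); lra. Qed.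

Lemma SeriesZ_nonneg F : nonneg F -> 0 <= SeriesZ F.
Proof. intros H; apply Series_nonneg, zpairR_nonneg, H. Qed.

Lemma sum_list_le_SeriesZ F L : nonneg F -> ex_seriesZ F -> NoDup L -> sum_list F L <= SeriesZ F.
Proof.
  intros HF HS HN. destruct (incl_zbox L) as [n Hn].
  apply Rle_trans with (sum_list F (zbox n)); [apply sum_list_incl; auto |].
  rewrite sum_list_zbox. apply sum_n_le_Series; [apply zpairR_nonneg |]; auto.
Qed.

Lemma SeriesZ_ge_term F x : nonneg F -> ex_seriesZ F -> F x <= SeriesZ F.
Proof.
  intros HF HS. pose proof (sum_list_le_SeriesZ F [x] HF HS) as H. simpl in H.
  apply Rle_trans with (F x + 0); [lra | apply H; repeat constructor; auto].
Qed.

Lemma SeriesZ_bounded F B : nonneg F -> (forall L, NoDup L -> sum_list F L <= B) ->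
  ex_seriesZ F /\ SeriesZ F <= B.
Proof.
  intros HF HB. apply ex_series_nonneg_bounded; [apply zpairR_nonneg, HF |].
  intros n; rewrite <- sum_list_zbox; apply HB, NoDup_zbox.
Qed.

Lemma SeriesZ_le F G : (forall x, 0 <= F x <= G x) -> ex_seriesZ G ->
  ex_seriesZ F /\ SeriesZ F <= SeriesZ G.
Proof.
  intros H HG. apply SeriesZ_bounded; [intros x; apply H |]. intros L HL.
  apply Rle_trans with (sum_list G L); [apply sum_list_le; intros x; apply H |].
  apply sum_list_le_SeriesZ; auto. intros x; specialize (H x); lra.
Qed.

Lemma SeriesZ_ext F G : (forall x, F x = G x) -> SeriesZ F = SeriesZ G.
Proof. intros H; apply Series_ext; intros n; unfold zpairR; rewrite !H; auto. Qed.

Lemma ex_seriesZ_ext F G : (forall x, F x = G x) -> ex_seriesZ F -> ex_seriesZ G.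
Proof. intros H; apply ex_series_ext; intros n; unfold zpairR; rewrite !H; auto. Qed.

Lemma ex_seriesZ_plus F G : ex_seriesZ F -> ex_seriesZ G -> ex_seriesZ (fun x => F x + G x).
Proof.
  intros H1 H2. eapply ex_series_ext; [| exact (ex_series_plus _ _ H1 H2)].
  intros n; unfold zpairR; cbn; unfold plus; cbn; ring.
Qed.

Lemma SeriesZ_plus F G : ex_seriesZ F -> ex_seriesZ G ->
  SeriesZ (fun x => F x + G x) = SeriesZ F + SeriesZ G.
Proof.
  intros H1 H2. unfold SeriesZ. rewrite <- Series_plus by auto.
  apply Series_ext; intros n; unfold zpairR; ring.
Qed.

Lemma ex_seriesZ_scal c F : ex_seriesZ F -> ex_seriesZ (fun x => c * F x).
Proof.
  intros H. eapply ex_series_ext; [| exact (ex_series_scal_l c _ H)].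
  intros n; unfold zpairR; cbn; unfold scal, mult; cbn; ring.
Qed.

Lemma SeriesZ_scal c F : SeriesZ (fun x => c * F x) = c * SeriesZ F.
Proof. unfold SeriesZ; rewrite <- Series_scal_l; apply Series_ext; intros n; unfold zpairR; ring. Qed.

Lemma SeriesZ_sum_list (H : Z -> Z -> R) L : (forall m, ex_seriesZ (H m)) ->
  ex_seriesZ (fun k => sum_list (fun m => H m k) L) /\
  SeriesZ (fun k => sum_list (fun m => H m k) L) = sum_list (fun m => SeriesZ (H m)) L.
Proof.
  intros HS. induction L as [|a L [IH1 IH2]]; simpl.
  - destruct (SeriesZ_bounded (fun _ => 0) 0) as [H0 H0'];
      [intros x; lra | intros L _; induction L; simpl; lra |].
    pose proof (SeriesZ_nonneg (fun _ => 0) (fun _ => Rle_refl 0)); split; [exact H0 | lra].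
  - split; [apply ex_seriesZ_plus | rewrite SeriesZ_plus, IH2]; auto.
Qed.

Lemma Rle_of_pow2_le a b : 0 <= b -> a ^ 2 <= b ^ 2 -> a <= b.
Proof. intros Hb H. destruct (Rle_lt_dec a b) as [|Hl]; [auto | nra]. Qed.

Lemma Cauchy_Schwarz_step f g X P Q : 0 <= f -> 0 <= g -> 0 <= X -> 0 <= P -> 0 <= Q ->
  X ^ 2 <= P * Q -> (f * g + X) ^ 2 <= (f ^ 2 + P) * (g ^ 2 + Q).
Proof.
  intros Hf Hg HX HP HQ HXPQ.
  (* AM-GM: [(2 f g X)^2 <= 4 (f^2 Q) (g^2 P) <= (f^2 Q + g^2 P)^2] *)
  assert (2 * f * g * X <= f ^ 2 * Q + g ^ 2 * P).
  { apply Rle_of_pow2_le; [nra |].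
    assert ((f * g) ^ 2 * X ^ 2 <= (f * g) ^ 2 * (P * Q)) by (apply Rmult_le_compat_l; nra).
    pose proof (pow2_ge_0 (f ^ 2 * Q - g ^ 2 * P)). nra. }
  nra.
Qed.

Lemma sum_list_Cauchy_Schwarz F G l : nonneg F -> nonneg G ->
  sum_list (fun x => F x * G x) l ^ 2 <=
  sum_list (fun x => F x ^ 2) l * sum_list (fun x => G x ^ 2) l.
Proof.
  intros HF HG. induction l as [|a l IH]; simpl; [lra |].
  apply Cauchy_Schwarz_step; auto; apply sum_list_nonneg; intros x;
    pose proof (HF x); pose proof (HG x); nra.
Qed.

Lemma SeriesZ_Cauchy_Schwarz F G : nonneg F -> nonneg G ->
  ex_seriesZ (fun x => F x ^ 2) -> ex_seriesZ (fun x => G x ^ 2) ->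
  ex_seriesZ (fun x => F x * G x) /\
  SeriesZ (fun x => F x * G x) ^ 2 <= SeriesZ (fun x => F x ^ 2) * SeriesZ (fun x => G x ^ 2).
Proof.
  intros HF HG SF SG.
  assert (HFG : nonneg (fun x => F x * G x)) by (intros x; apply Rmult_le_pos; auto).
  assert (HF2 : nonneg (fun x => F x ^ 2)) by (intros x; apply pow2_ge_0).
  assert (HG2 : nonneg (fun x => G x ^ 2)) by (intros x; apply pow2_ge_0).
  set (B := SeriesZ (fun x => F x ^ 2) * SeriesZ (fun x => G x ^ 2)).
  assert (HB : 0 <= B) by (apply Rmult_le_pos; apply SeriesZ_nonneg; auto).
  destruct (SeriesZ_bounded _ (sqrt B) HFG) as [S HS].
  { intros L HL. apply Rle_of_pow2_le; [apply sqrt_pos |].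
    rewrite pow2_sqrt by exact HB.
    apply Rle_trans with (1 := sum_list_Cauchy_Schwarz F G L HF HG).
    apply Rmult_le_compat; try apply sum_list_nonneg; auto; apply sum_list_le_SeriesZ; auto. }
  split; [exact S |]. rewrite <- (pow2_sqrt B) by exact HB.
  apply pow_incr; split; [apply SeriesZ_nonneg |]; auto.
Qed.

Lemma SeriesZ_comp_inj F (phi : Z -> Z) : (forall x y, phi x = phi y -> x = y) ->
  nonneg F -> ex_seriesZ F -> ex_seriesZ (fun x => F (phi x)) /\ SeriesZ (fun x => F (phi x)) <= SeriesZ F.
Proof.
  intros Hi HF HS. apply SeriesZ_bounded; [intros x; apply HF |].
  intros L HL. rewrite <- sum_list_map. apply sum_list_le_SeriesZ; auto.
  apply NoDup_map_NoDup_ForallPairs; auto. intros x y _ _; apply Hi.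
Qed.

Lemma SeriesZ_swap_le (H : Z -> Z -> R) : (forall m k, 0 <= H m k) ->
  (forall m, ex_seriesZ (H m)) -> (forall k, ex_seriesZ (fun m => H m k)) ->
  ex_seriesZ (fun k => SeriesZ (fun m => H m k)) ->
  ex_seriesZ (fun m => SeriesZ (H m)) /\
  SeriesZ (fun m => SeriesZ (H m)) <= SeriesZ (fun k => SeriesZ (fun m => H m k)).
Proof.
  intros Hp S1 S2 S3. apply SeriesZ_bounded; [intros m; apply SeriesZ_nonneg; intros k; apply Hp |].
  intros L HL. rewrite <- (proj2 (SeriesZ_sum_list H L S1)).
  apply SeriesZ_le; auto. intros k; split; [apply sum_list_nonneg; intros m; auto |].
  apply sum_list_le_SeriesZ; auto. intros m; auto.
Qed.

(** * Absolutely summable complex families *)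

Definition abs_summableZ (f : Z -> C) : Prop := ex_seriesZ (fun k => Cmod (f k)).

Lemma im_le_Cmod (c : C) : Rabs (Im c) <= Cmod c.
Proof.
  apply Rle_of_pow2_le; [apply Cmod_ge_0 |].
  rewrite pow2_abs, Cmod2_alt. pose proof (pow2_ge_0 (Re c)). lra.
Qed.

Lemma Cmod_zpair_le f n : Cmod (zpair f n) <= zpairR (fun k => Cmod (f k)) n.
Proof. apply Cmod_triangle. Qed.

Lemma ex_series_zpair_proj (pr : C -> R) f : (forall c, Rabs (pr c) <= Cmod c) ->
  abs_summableZ f -> ex_series (fun n => pr (zpair f n)).
Proof.
  intros Hpr H. apply ex_series_Rabs.
  apply (@ex_series_le R_AbsRing R_CompleteNormedModule) with (2 := H).
  intros n. change (Rabs (Rabs (pr (zpair f n))) <= zpairR (fun k => Cmod (f k)) n).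
  rewrite Rabs_Rabsolu. eapply Rle_trans; [apply Hpr | apply Cmod_zpair_le].
Qed.

Lemma Zsum_minus f1 f2 : abs_summableZ f1 -> abs_summableZ f2 ->
  Zsum (fun k => Cminus (f1 k) (f2 k)) = Cminus (Zsum f1) (Zsum f2).
Proof.
  intros H1 H2. unfold Zsum.
  rewrite (Series_ext _ (fun n => Re (zpair f1 n) - Re (zpair f2 n))),
    (Series_ext (fun n => Im _) (fun n => Im (zpair f1 n) - Im (zpair f2 n))),
    !Series_minus; try (apply ex_series_zpair_proj; auto using re_le_Cmod, im_le_Cmod).
  - unfold Cminus, Cplus, Copp; simpl; f_equal; ring.
  - intros n; unfold zpair; simpl; ring.
  - intros n; unfold zpair; simpl; ring.
Qed.

Lemma Cmod_Zsum_le f : abs_summableZ f -> Cmod (Zsum f) <= SeriesZ (fun k => Cmod (f k)).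
Proof.
  intros H.
  set (B := SeriesZ (fun k => Cmod (f k))).
  set (sr := sum_n (fun n => Re (zpair f n))). set (si := sum_n (fun n => Im (zpair f n))).
  assert (HB : 0 <= B) by (apply SeriesZ_nonneg; intros k; apply Cmod_ge_0).
  assert (Hpartial : forall n, Cmod (sr n, si n) <= sum_n (zpairR (fun k => Cmod (f k))) n).
  { unfold sr, si. induction n as [|n IH].
    - rewrite !sum_O. apply Cmod_zpair_le.
    - rewrite !sum_n_succ.
      match goal with |- Cmod (?a + _, ?b + _) <= ?r =>
        change (Cmod (Cplus (a, b) (zpair f (S n))) <= r);
        pose proof (Cmod_triangle (a, b) (zpair f (S n))) end.
      pose proof (Cmod_zpair_le f (S n)). lra. }
  assert (Hsq : forall n, sr n * sr n + si n * si n <= B ^ 2).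
  { intros n. replace (sr n * sr n + si n * si n) with (Cmod (sr n, si n) ^ 2)
      by (rewrite Cmod2_alt; simpl; ring).
    apply pow_incr. split; [apply Cmod_ge_0 |].
    eapply Rle_trans; [apply Hpartial | apply sum_n_le_Series; auto].
    apply zpairR_nonneg; intros k; apply Cmod_ge_0. }
  assert (Lr := Series_correct _ (ex_series_zpair_proj Re f re_le_Cmod H)).
  assert (Li := Series_correct _ (ex_series_zpair_proj Im f im_le_Cmod H)).
  set (Sr := Series (fun n => Re (zpair f n))) in Lr. set (Si := Series (fun n => Im (zpair f n))) in Li.
  assert (Hle : Sr * Sr + Si * Si <= B ^ 2) by exact (is_lim_seq_le _ _ _ _ Hsq
    (is_lim_seq_plus' _ _ _ _ (is_lim_seq_mult' _ _ _ _ Lr Lr) (is_lim_seq_mult' _ _ _ _ Li Li))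
    (is_lim_seq_const _)).
  apply Rle_of_pow2_le; [exact HB |]. unfold Zsum; rewrite Cmod2_alt; cbn [Re Im fst snd]. fold Sr Si. nra.
Qed.

(** * The weights <j>^e *)

Definition angle (j : Z) : R := IZR (Z.max 1 (Z.abs j)).
Definition weight (e : R) (j : Z) : R := Rpower (angle j) e.

Lemma hterm_weight s u j : hterm s u j = Cmod (u j) ^ 2 * weight (2 * s) j.
Proof. reflexivity. Qed.

Lemma angle_ge_1 j : 1 <= angle j.
Proof. apply IZR_le; lia. Qed.

Lemma angle_pos j : 0 < angle j.
Proof. pose proof (angle_ge_1 j); lra. Qed.

Lemma angle_of_nat n : (1 <= n)%nat -> angle (Z.of_nat n) = INR n.
Proof. intros; unfold angle; rewrite INR_IZR_INZ; f_equal; lia. Qed.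

Lemma angle_of_neg_nat n : angle (- Z.of_nat (S n)) = INR (S n).
Proof. unfold angle; rewrite INR_IZR_INZ; f_equal; lia. Qed.

Lemma angle_sub_le m k : angle m <= angle k + angle (m - k).
Proof. unfold angle; rewrite <- plus_IZR; apply IZR_le; lia. Qed.

Lemma inrange_double N j : inrange N j = true -> (- Z.of_nat N <= 2 * j < Z.of_nat N)%Z.
Proof.
  unfold inrange, Defs.Nminus, Defs.Nplus. intros Hr.
  apply andb_prop in Hr as [H1 H2]; apply Z.leb_le in H1, H2.
  pose proof (Z.div_mod (Z.of_nat N) 2 ltac:(lia)); pose proof (Z.mod_pos_bound (Z.of_nat N) 2 ltac:(lia)).
  pose proof (Z.div_mod (Z.of_nat N - 1) 2 ltac:(lia)).
  pose proof (Z.mod_pos_bound (Z.of_nat N - 1) 2 ltac:(lia)).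
  lia.
Qed.

Lemma angle_alias N p j : (1 <= N)%nat -> inrange N j = true ->
  angle p * angle j <= angle (p * Z.of_nat N + j).
Proof.
  intros HN Hr. apply inrange_double in Hr.
  unfold angle; rewrite <- mult_IZR; apply IZR_le.
  destruct (Z.eq_dec p 0) as [->|Hp]; [lia |].
  destruct (Z.eq_dec j 0) as [->|Hj]; [rewrite Z.add_0_r, Z.abs_mul; nia |].
  assert (Z.abs p * Z.abs j <= Z.abs (p * Z.of_nat N + j))%Z.
  { assert (Z.abs (p * Z.of_nat N) - Z.abs j <= Z.abs (p * Z.of_nat N + j))%Z by lia.
    rewrite Z.abs_mul in *; nia. }
  rewrite !Z.max_r by nia; lia.
Qed.

Lemma Rpower_le_base_nonpos x y e : 0 < x -> x <= y -> e <= 0 -> Rpower y e <= Rpower x e.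
Proof.
  intros Hx Hxy He. replace e with (- - e) by ring. rewrite (Rpower_Ropp y (- e)), (Rpower_Ropp x (- e)).
  apply Rinv_le_contravar; [apply exp_pos | apply Rle_Rpower_l; lra].
Qed.

Lemma Rpower_1_base e : Rpower 1 e = 1.
Proof. unfold Rpower; rewrite ln_1, Rmult_0_r; apply exp_0. Qed.

Lemma weight_pos e j : 0 < weight e j.
Proof. apply exp_pos. Qed.

Lemma weight_plus a b j : weight (a + b) j = weight a j * weight b j.
Proof. apply Rpower_plus. Qed.

Lemma weight_sqr e j : weight e j ^ 2 = weight (2 * e) j.
Proof. replace (2 * e) with (e + e) by ring; rewrite weight_plus; ring. Qed.

Lemma weight_opp_mul e j : weight (- e) j * weight e j = 1.
Proof. rewrite <- weight_plus, Rplus_opp_l; apply Rpower_O, angle_pos. Qed.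

Lemma weight_ge_1 e j : 0 <= e -> 1 <= weight e j.
Proof.
  intros He. rewrite <- (Rpower_O (angle j)) by apply angle_pos.
  apply Rle_Rpower; [apply angle_ge_1 | exact He].
Qed.

Lemma weight_le_1 e j : e <= 0 -> weight e j <= 1.
Proof.
  intros He. rewrite <- (Rpower_1_base e).
  apply Rpower_le_base_nonpos; [lra | apply angle_ge_1 | exact He].
Qed.

Lemma weight_0 e : weight e 0 = 1.
Proof. apply Rpower_1_base. Qed.

(* Peetre's inequality: [<m> <= <k> + <m-k> <= 2 max(<k>, <m-k>)]. *)
Lemma weight_sub_le s m k : 0 <= s -> weight s m <= Rpower 2 s * (weight s k + weight s (m - k)).
Proof.
  intros Hs. unfold weight.
  pose proof (angle_pos k) as Ha; pose proof (angle_pos (m - k)) as Hb.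
  pose proof (Rmax_l (angle k) (angle (m - k))); pose proof (Rmax_r (angle k) (angle (m - k))).
  apply Rle_trans with (Rpower (2 * Rmax (angle k) (angle (m - k))) s).
  { apply Rle_Rpower_l; [exact Hs | split; [apply angle_pos |]].
    pose proof (angle_sub_le m k); lra. }
  rewrite <- Rpower_mult_distr by lra.
  apply Rmult_le_compat_l; [left; apply exp_pos |].
  pose proof (exp_pos (s * ln (angle k))); pose proof (exp_pos (s * ln (angle (m - k)))).
  unfold Rpower; apply Rmax_case; lra.
Qed.

Lemma Rpower_telescope a x : 1 < a -> 0 < x ->
  (a - 1) * Rpower (x + 1) (- a) <= Rpower x (1 - a) - Rpower (x + 1) (1 - a).
Proof.
  intros Ha Hx. unfold Rpower.
  set (L := ln (x + 1)); set (l := ln x).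
  (* [ln (x + 1) - ln x >= 1 / (x + 1)], from [ln t <= t - 1] at [t = x / (x + 1)] *)
  assert (HLl : 1 / (x + 1) <= L - l).
  { unfold L, l. pose proof (exp_ineq1_le (ln (x / (x + 1)))) as Ht.
    rewrite exp_ln in Ht by (apply Rdiv_lt_0_compat; lra).
    rewrite ln_div in Ht by lra. replace (x / (x + 1)) with (1 - 1 / (x + 1)) in Ht by (field; lra). lra. }
  assert (E1 : exp ((1 - a) * l) = exp ((1 - a) * L) * exp ((a - 1) * (L - l)))
    by (rewrite <- exp_plus; f_equal; ring).
  assert (E2 : exp (- a * L) = exp ((1 - a) * L) * (1 / (x + 1))).
  { replace (- a * L) with ((1 - a) * L + - L) by ring. rewrite exp_plus, exp_Ropp.
    unfold L; rewrite exp_ln by lra. field; lra. }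
  rewrite E1, E2. pose proof (exp_ineq1_le ((a - 1) * (L - l))). pose proof (exp_pos ((1 - a) * L)).
  assert ((a - 1) * (1 / (x + 1)) <= (a - 1) * (L - l)) by (apply Rmult_le_compat_l; lra).
  nra.
Qed.

Lemma ex_seriesZ_weight a : 1 < a -> ex_seriesZ (weight (- a)).
Proof.
  intros Ha.
  assert (Hnn : nonneg (weight (- a))) by (intros x; left; apply weight_pos).
  assert (Hle1 : forall j, weight (- a) j <= 1) by (intros j; apply weight_le_1; lra).
  set (c := 2 / (a - 1)).
  assert (Hc : 0 < c) by (apply Rdiv_lt_0_compat; lra).
  assert (HP : forall K, sum_n (zpairR (weight (- a))) (S K) <= 4 + c - c * Rpower (INR (S K)) (1 - a)).
  { induction K as [|K IH].
    - rewrite sum_n_succ, sum_O. unfold zpairR.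
      pose proof (Hle1 (Z.of_nat 0)); pose proof (Hle1 (- Z.of_nat 1)%Z).
      pose proof (Hle1 (Z.of_nat 1)); pose proof (Hle1 (- Z.of_nat 2)%Z).
      simpl INR; rewrite Rpower_1_base. lra.
    - rewrite sum_n_succ. unfold zpairR at 2, weight.
      rewrite angle_of_neg_nat, angle_of_nat by lia.
      pose proof (Rpower_telescope a (INR (S K)) Ha ltac:(apply lt_0_INR; lia)) as Ht.
      rewrite <- S_INR in Ht.
      assert (Rpower (INR (S (S (S K)))) (- a) <= Rpower (INR (S (S K))) (- a))
        by (apply Rpower_le_base_nonpos; [apply lt_0_INR; lia | apply le_INR; lia | lra]).
      assert (c * ((a - 1) * Rpower (INR (S (S K))) (- a)) = 2 * Rpower (INR (S (S K))) (- a))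
        by (unfold c; field; lra).
      assert (c * ((a - 1) * Rpower (INR (S (S K))) (- a)) <=
              c * (Rpower (INR (S K)) (1 - a) - Rpower (INR (S (S K))) (1 - a)))
        by (apply Rmult_le_compat_l; lra).
      unfold weight in IH. lra. }
  apply ex_series_nonneg_bounded with (4 + c); [apply zpairR_nonneg, Hnn |].
  intros [|n].
  - rewrite sum_O. unfold zpairR. pose proof (Hle1 (Z.of_nat 0)); pose proof (Hle1 (- Z.of_nat 1)%Z). lra.
  - specialize (HP n). pose proof (exp_pos ((1 - a) * ln (INR (S n)))).
    unfold Rpower in HP. nra.
Qed.

Definition zeta (s : R) : R := SeriesZ (weight (- (2 * s))).

Lemma ex_seriesZ_zeta s : 1 / 2 < s -> ex_seriesZ (weight (- (2 * s))).
Proof. intros Hs; apply ex_seriesZ_weight; lra. Qed.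

Lemma zeta_ge_1 s : 1 / 2 < s -> 1 <= zeta s.
Proof.
  intros Hs. rewrite <- (weight_0 (- (2 * s))).
  apply SeriesZ_ge_term; [intros j; left; apply weight_pos | apply ex_seriesZ_zeta, Hs].
Qed.

(** * Convolution estimates *)

Definition hsq (s : R) (a : Z -> R) (k : Z) : R := a k ^ 2 * weight (2 * s) k.

Definition conv (a b : Z -> R) (m : Z) : R := SeriesZ (fun k => a k * b (m - k)%Z).

Lemma hsq_nonneg s a : nonneg (hsq s a).
Proof. intros k; apply Rmult_le_pos; [apply pow2_ge_0 | left; apply weight_pos]. Qed.

Lemma hsq_weight_mul s a k : (weight s k * a k) ^ 2 = hsq s a k.
Proof. unfold hsq; rewrite <- weight_sqr; ring. Qed.

Lemma conv_nonneg a b : nonneg a -> nonneg b -> nonneg (conv a b).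
Proof. intros Ha Hb m; apply SeriesZ_nonneg; intros k; apply Rmult_le_pos; auto. Qed.

Lemma SeriesZ_reflect Q m : nonneg Q -> ex_seriesZ Q ->
  ex_seriesZ (fun k => Q (m - k)%Z) /\ SeriesZ (fun k => Q (m - k)%Z) <= SeriesZ Q.
Proof. intros; apply SeriesZ_comp_inj; auto; intros; lia. Qed.

Lemma SeriesZ_translate Q k : nonneg Q -> ex_seriesZ Q ->
  ex_seriesZ (fun m => Q (m - k)%Z) /\ SeriesZ (fun m => Q (m - k)%Z) <= SeriesZ Q.
Proof. intros; apply SeriesZ_comp_inj; auto; intros; lia. Qed.

Lemma conv_sq_le P Q m : nonneg P -> nonneg Q -> ex_seriesZ Q ->
  ex_seriesZ (fun k => P k ^ 2 * Q (m - k)%Z) ->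
  ex_seriesZ (fun k => P k * Q (m - k)%Z) /\
  conv P Q m ^ 2 <= SeriesZ Q * SeriesZ (fun k => P k ^ 2 * Q (m - k)%Z).
Proof.
  intros HP HQ SQ SH. destruct (SeriesZ_reflect Q m HQ SQ) as [SR1 SR2].
  (* Cauchy-Schwarz for the factorisation [P k Q(m-k) = (P k sqrt Q(m-k)) sqrt Q(m-k)] *)
  set (F := fun k => P k * sqrt (Q (m - k)%Z)). set (G := fun k => sqrt (Q (m - k)%Z)).
  assert (EFG : forall k, F k * G k = P k * Q (m - k)%Z)
    by (intros k; unfold F, G; rewrite Rmult_assoc, sqrt_sqrt; auto).
  assert (EF : forall k, F k ^ 2 = P k ^ 2 * Q (m - k)%Z)
    by (intros k; unfold F; rewrite Rpow_mult_distr, pow2_sqrt; auto).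
  assert (EG : forall k, G k ^ 2 = Q (m - k)%Z) by (intros k; unfold G; rewrite pow2_sqrt; auto).
  destruct (SeriesZ_Cauchy_Schwarz F G) as [C D].
  - intros k; apply Rmult_le_pos; [auto | apply sqrt_pos].
  - intros k; apply sqrt_pos.
  - apply ex_seriesZ_ext with (2 := SH); intros k; symmetry; apply EF.
  - apply ex_seriesZ_ext with (2 := SR1); intros k; symmetry; apply EG.
  - rewrite (SeriesZ_ext _ _ EFG), (SeriesZ_ext _ _ EF), (SeriesZ_ext _ _ EG) in D.
    split; [exact (ex_seriesZ_ext _ _ EFG C) |].
    eapply Rle_trans; [exact D |]. rewrite Rmult_comm.
    apply Rmult_le_compat_r; [| exact SR2].
    apply SeriesZ_nonneg; intros k; apply Rmult_le_pos; [apply pow2_ge_0 | auto].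
Qed.

Lemma conv_young P Q : nonneg P -> nonneg Q -> ex_seriesZ (fun k => P k ^ 2) -> ex_seriesZ Q ->
  (forall m, ex_seriesZ (fun k => P k * Q (m - k)%Z)) /\
  ex_seriesZ (fun m => conv P Q m ^ 2) /\
  SeriesZ (fun m => conv P Q m ^ 2) <= SeriesZ Q ^ 2 * SeriesZ (fun k => P k ^ 2).
Proof.
  intros HP HQ SP SQ.
  set (H := fun m k => P k ^ 2 * Q (m - k)%Z).
  assert (HH : forall m k, 0 <= H m k) by (intros; apply Rmult_le_pos; [apply pow2_ge_0 | auto]).
  assert (HQ0 : 0 <= SeriesZ Q) by (apply SeriesZ_nonneg, HQ).
  assert (SH : forall m, ex_seriesZ (H m)).
  { intros m. apply (SeriesZ_le _ (fun k => SeriesZ Q * P k ^ 2)); [| apply ex_seriesZ_scal, SP].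
    intros k; split; [apply HH |]. unfold H; rewrite Rmult_comm.
    apply Rmult_le_compat_r; [apply pow2_ge_0 | apply SeriesZ_ge_term; auto]. }
  assert (SHt : forall k, ex_seriesZ (fun m => H m k) /\ SeriesZ (fun m => H m k) <= SeriesZ Q * P k ^ 2).
  { intros k. destruct (SeriesZ_translate Q k HQ SQ) as [S1 S2]. unfold H.
    split; [apply ex_seriesZ_scal, S1 |]. rewrite SeriesZ_scal, Rmult_comm.
    apply Rmult_le_compat_r; [apply pow2_ge_0 | exact S2]. }
  assert (SHs : ex_seriesZ (fun k => SeriesZ (fun m => H m k)) /\
                SeriesZ (fun k => SeriesZ (fun m => H m k)) <= SeriesZ Q * SeriesZ (fun k => P k ^ 2)).
  { rewrite <- SeriesZ_scal. apply SeriesZ_le; [| apply ex_seriesZ_scal, SP].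
    intros k; split; [apply SeriesZ_nonneg; intros m; apply HH | apply SHt]. }
  destruct (SeriesZ_swap_le H HH SH (fun k => proj1 (SHt k)) (proj1 SHs)) as [ST HT].
  assert (PW : forall m, 0 <= conv P Q m ^ 2 <= SeriesZ Q * SeriesZ (H m))
    by (intros m; split; [apply pow2_ge_0 | apply (conv_sq_le P Q m HP HQ SQ (SH m))]).
  destruct (SeriesZ_le _ _ PW (ex_seriesZ_scal _ _ ST)) as [S B].
  split; [intros m; apply (conv_sq_le P Q m HP HQ SQ (SH m)) |]. split; [exact S |].
  eapply Rle_trans; [exact B |]. rewrite SeriesZ_scal.
  apply Rle_trans with (SeriesZ Q * (SeriesZ Q * SeriesZ (fun k => P k ^ 2)));
    [apply Rmult_le_compat_l; [| destruct SHs]; lra | right; ring].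
Qed.

Lemma SeriesZ_sq_le_zeta s a : 1 / 2 < s -> nonneg a -> ex_seriesZ (hsq s a) ->
  ex_seriesZ a /\ SeriesZ a ^ 2 <= zeta s * SeriesZ (hsq s a).
Proof.
  intros Hs Ha Sa.
  assert (E : forall k, weight (- s) k * (weight s k * a k) = a k)
    by (intros k; rewrite <- Rmult_assoc, weight_opp_mul; ring).
  assert (E1 : forall k, weight (- s) k ^ 2 = weight (- (2 * s)) k)
    by (intros k; rewrite weight_sqr; f_equal; ring).
  destruct (SeriesZ_Cauchy_Schwarz (weight (- s)) (fun k => weight s k * a k)) as [C D].
  - intros k; left; apply weight_pos.
  - intros k; apply Rmult_le_pos; [left; apply weight_pos | auto].
  - apply ex_seriesZ_ext with (2 := ex_seriesZ_zeta s Hs); intros k; symmetry; apply E1.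
  - apply ex_seriesZ_ext with (2 := Sa); intros k; symmetry; apply hsq_weight_mul.
  - rewrite (SeriesZ_ext _ _ E), (SeriesZ_ext _ _ E1), (SeriesZ_ext _ _ (hsq_weight_mul s a)) in D.
    split; [exact (ex_seriesZ_ext _ _ E C) | exact D].
Qed.

Lemma conv_comm_le a b m : nonneg a -> nonneg b -> ex_seriesZ (fun k => b k * a (m - k)%Z) ->
  ex_seriesZ (fun k => a k * b (m - k)%Z) /\ conv a b m <= conv b a m.
Proof.
  intros Ha Hb Sba.
  destruct (SeriesZ_reflect (fun k => b k * a (m - k)%Z) m) as [S1 S2];
    [intros k; apply Rmult_le_pos; auto | exact Sba |].
  assert (E : forall k, b (m - k)%Z * a (m - (m - k))%Z = a k * b (m - k)%Z)
    by (intros k; replace (m - (m - k))%Z with k by lia; ring).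
  split; [exact (ex_seriesZ_ext _ _ E S1) | unfold conv; rewrite <- (SeriesZ_ext _ _ E); exact S2].
Qed.

Lemma weight_conv_le s a b m : 0 <= s -> nonneg a -> nonneg b ->
  ex_seriesZ (fun k => weight s k * a k * b (m - k)%Z) ->
  ex_seriesZ (fun k => weight s k * b k * a (m - k)%Z) ->
  weight s m * conv a b m <=
  Rpower 2 s * (conv (fun k => weight s k * a k) b m + conv (fun k => weight s k * b k) a m).
Proof.
  intros Hs Ha Hb SA SB.
  destruct (conv_comm_le a (fun k => weight s k * b k) m) as [SaB HaB];
    [auto | intros k; apply Rmult_le_pos; [left; apply weight_pos | auto] | exact SB |].
  unfold conv at 1. rewrite <- SeriesZ_scal.
  apply Rle_trans with (SeriesZ (fun k => Rpower 2 s *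
    (weight s k * a k * b (m - k)%Z + a k * (weight s (m - k) * b (m - k)%Z)))).
  - apply SeriesZ_le; [| apply ex_seriesZ_scal, ex_seriesZ_plus; auto].
    intros k. assert (0 <= a k * b (m - k)%Z) by (apply Rmult_le_pos; auto).
    split; [apply Rmult_le_pos; [left; apply weight_pos | auto] |].
    replace (Rpower 2 s * _) with (Rpower 2 s * (weight s k + weight s (m - k)) * (a k * b (m - k)%Z))
      by ring.
    apply Rmult_le_compat_r; [auto | apply weight_sub_le, Hs].
  - rewrite SeriesZ_scal, SeriesZ_plus by auto.
    apply Rmult_le_compat_l; [left; apply exp_pos |]. unfold conv in *. lra.
Qed.

Lemma hsq_conv_le s a b m : 0 <= s -> nonneg a -> nonneg b ->
  ex_seriesZ (fun k => weight s k * a k * b (m - k)%Z) ->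
  ex_seriesZ (fun k => weight s k * b k * a (m - k)%Z) ->
  hsq s (conv a b) m <=
  2 * Rpower 2 (2 * s) *
    (conv (fun k => weight s k * a k) b m ^ 2 + conv (fun k => weight s k * b k) a m ^ 2).
Proof.
  intros Hs Ha Hb SA SB.
  set (A := fun k => weight s k * a k). set (B := fun k => weight s k * b k).
  set (c := Rpower 2 s).
  assert (Hc2 : c ^ 2 = Rpower 2 (2 * s))
    by (unfold c; simpl; rewrite Rmult_1_r, <- Rpower_plus; f_equal; ring).
  rewrite <- hsq_weight_mul, <- Hc2.
  pose proof (weight_conv_le s a b m Hs Ha Hb SA SB) as Hp. fold c A B in Hp.
  assert (0 <= weight s m * conv a b m)
    by (apply Rmult_le_pos; [left; apply weight_pos | apply conv_nonneg; auto]).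
  assert (0 <= conv A b m)
    by (apply conv_nonneg; auto; intros k; apply Rmult_le_pos; [left; apply weight_pos | auto]).
  assert (0 <= conv B a m)
    by (apply conv_nonneg; auto; intros k; apply Rmult_le_pos; [left; apply weight_pos | auto]).
  apply Rle_trans with ((c * (conv A b m + conv B a m)) ^ 2); [apply pow_incr; lra |].
  pose proof (pow2_ge_0 (conv A b m - conv B a m)). nra.
Qed.

Definition mult_const (s : R) : R := 4 * Rpower 2 (2 * s) * zeta s.

Lemma mult_const_pos s : 1 / 2 < s -> 0 < mult_const s.
Proof.
  intros Hs. unfold mult_const, Rpower.
  pose proof (zeta_ge_1 s Hs); pose proof (exp_pos (2 * s * ln 2)); nra.
Qed.

Lemma conv_hsq_le s a b : 1 / 2 < s -> nonneg a -> nonneg b ->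
  ex_seriesZ (hsq s a) -> ex_seriesZ (hsq s b) ->
  (forall m, ex_seriesZ (fun k => a k * b (m - k)%Z)) /\
  ex_seriesZ (hsq s (conv a b)) /\
  SeriesZ (hsq s (conv a b)) <= mult_const s * SeriesZ (hsq s a) * SeriesZ (hsq s b).
Proof.
  intros Hs Ha Hb Sa Sb.
  set (A := fun k => weight s k * a k). set (B := fun k => weight s k * b k).
  assert (HA : nonneg A) by (intros k; apply Rmult_le_pos; [left; apply weight_pos | auto]).
  assert (HB : nonneg B) by (intros k; apply Rmult_le_pos; [left; apply weight_pos | auto]).
  assert (SA : ex_seriesZ (fun k => A k ^ 2))
    by (apply ex_seriesZ_ext with (2 := Sa); intros k; symmetry; apply hsq_weight_mul).
  assert (SB : ex_seriesZ (fun k => B k ^ 2))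
    by (apply ex_seriesZ_ext with (2 := Sb); intros k; symmetry; apply hsq_weight_mul).
  assert (NA : SeriesZ (fun k => A k ^ 2) = SeriesZ (hsq s a)) by (apply SeriesZ_ext, hsq_weight_mul).
  assert (NB : SeriesZ (fun k => B k ^ 2) = SeriesZ (hsq s b)) by (apply SeriesZ_ext, hsq_weight_mul).
  destruct (SeriesZ_sq_le_zeta s a Hs Ha Sa) as [S1a L1a].
  destruct (SeriesZ_sq_le_zeta s b Hs Hb Sb) as [S1b L1b].
  destruct (conv_young A b HA Hb SA S1b) as [Y1a [Y1b Y1c]].
  destruct (conv_young B a HB Ha SB S1a) as [Y2a [Y2b Y2c]].
  rewrite NA in Y1c; rewrite NB in Y2c.
  assert (Sab : forall m, ex_seriesZ (fun k => a k * b (m - k)%Z)).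
  { intros m. apply (SeriesZ_le _ _) with (2 := Y1a m). intros k.
    assert (0 <= a k * b (m - k)%Z) by (apply Rmult_le_pos; auto).
    pose proof (weight_ge_1 s k ltac:(lra)).
    split; [auto | unfold A; rewrite Rmult_assoc; nra]. }
  assert (PW : forall m, 0 <= hsq s (conv a b) m <=
                         2 * Rpower 2 (2 * s) * (conv A b m ^ 2 + conv B a m ^ 2))
    by (intros m; split; [apply hsq_nonneg | apply hsq_conv_le; auto; lra]).
  destruct (SeriesZ_le _ _ PW (ex_seriesZ_scal _ _ (ex_seriesZ_plus _ _ Y1b Y2b))) as [S T].
  split; [exact Sab |]. split; [exact S |].
  assert (Na : 0 <= SeriesZ (hsq s a)) by apply SeriesZ_nonneg, hsq_nonneg.
  assert (Nb : 0 <= SeriesZ (hsq s b)) by apply SeriesZ_nonneg, hsq_nonneg.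
  assert (Y1 : SeriesZ (fun m => conv A b m ^ 2) <= zeta s * SeriesZ (hsq s b) * SeriesZ (hsq s a))
    by (eapply Rle_trans; [exact Y1c | apply Rmult_le_compat_r; auto]).
  assert (Y2 : SeriesZ (fun m => conv B a m ^ 2) <= zeta s * SeriesZ (hsq s a) * SeriesZ (hsq s b))
    by (eapply Rle_trans; [exact Y2c | apply Rmult_le_compat_r; auto]).
  eapply Rle_trans; [exact T |]. rewrite SeriesZ_scal, SeriesZ_plus by auto.
  unfold mult_const. pose proof (exp_pos (2 * s * ln 2)). unfold Rpower in *. nra.
Qed.

(** * The operators *)

Lemma Hs_dominated s u w : (forall j, Cmod (u j) <= Cmod (w j)) -> Hs s w ->
  Hs s u /\ SeriesZ (hterm s u) <= SeriesZ (hterm s w).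
Proof.
  intros H Hw. apply SeriesZ_le; [| exact Hw]. intros j. rewrite !hterm_weight.
  pose proof (Cmod_ge_0 (u j)); pose proof (weight_pos (2 * s) j); pose proof (H j).
  split; [nra |]. apply Rmult_le_compat_r; [lra | apply pow_incr; lra].
Qed.

Lemma Cplus_op_Hs_bound s u :
  Hs s u -> Hs s (Cplus_op u) /\ SeriesZ (hterm s (Cplus_op u)) <= SeriesZ (hterm s u).
Proof.
  apply Hs_dominated. intros j; unfold Cplus_op.
  destruct (Z.leb 0 j); [lra | rewrite Cmod_0; apply Cmod_ge_0].
Qed.

Lemma Pop_Hs_bound s N u : Hs s u -> Hs s (Pop N u) /\ SeriesZ (hterm s (Pop N u)) <= SeriesZ (hterm s u).
Proof.
  apply Hs_dominated. intros j; unfold Pop.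
  destruct (inrange N j); [lra | rewrite Cmod_0; apply Cmod_ge_0].
Qed.

Lemma Pop_sub N u u' : fsub (Pop N u) (Pop N u') = Pop N (fsub u u').
Proof.
  apply functional_extensionality; intros j; unfold fsub, Pop.
  destruct (inrange N j); [reflexivity | ring].
Qed.

Lemma Mop_abs_summable s h v m : 1 / 2 < s -> Hs s h -> Hs s v ->
  abs_summableZ (fun k => Cmult (h k) (v (m - k)%Z)).
Proof.
  intros Hs0 Hh Hv.
  destruct (conv_hsq_le s (fun k => Cmod (h k)) (fun k => Cmod (v k))) as [S _];
    try (intros k; apply Cmod_ge_0); auto.
  apply ex_seriesZ_ext with (2 := S m); intros k; symmetry; apply Cmod_mult.
Qed.

Lemma Cmod_Mop_le s h v m : 1 / 2 < s -> Hs s h -> Hs s v ->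
  Cmod (Mop h v m) <= conv (fun k => Cmod (h k)) (fun k => Cmod (v k)) m.
Proof.
  intros Hs0 Hh Hv. eapply Rle_trans; [apply Cmod_Zsum_le, (Mop_abs_summable s); auto |].
  right; apply SeriesZ_ext; intros k; apply Cmod_mult.
Qed.

Lemma Mop_Hs_bound s h v : 1 / 2 < s -> Hs s h -> Hs s v ->
  Hs s (Mop h v) /\
  SeriesZ (hterm s (Mop h v)) <= mult_const s * SeriesZ (hterm s h) * SeriesZ (hterm s v).
Proof.
  intros Hs0 Hh Hv.
  destruct (conv_hsq_le s (fun k => Cmod (h k)) (fun k => Cmod (v k))) as [_ [S B]];
    try (intros k; apply Cmod_ge_0); auto.
  destruct (SeriesZ_le (hterm s (Mop h v)) (hsq s (conv (fun k => Cmod (h k)) (fun k => Cmod (v k)))))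
    as [S' B']; [| exact S |].
  - intros m. rewrite hterm_weight. unfold hsq.
    pose proof (Cmod_ge_0 (Mop h v m)); pose proof (Cmod_Mop_le s h v m Hs0 Hh Hv).
    pose proof (weight_pos (2 * s) m).
    split; [nra | apply Rmult_le_compat_r; [lra | apply pow_incr; lra]].
  - split; [exact S' | eapply Rle_trans; [exact B' | exact B]].
Qed.

Lemma Mop_sub_l s g g' v : 1 / 2 < s -> Hs s g -> Hs s g' -> Hs s v ->
  fsub (Mop g v) (Mop g' v) = Mop (fsub g g') v.
Proof.
  intros Hs0 Hg Hg' Hv. apply functional_extensionality; intros m. unfold fsub, Mop.
  rewrite <- Zsum_minus by (apply (Mop_abs_summable s); auto).
  f_equal; apply functional_extensionality; intros k; ring.
Qed.

Lemma alias_index_inj N p p' j j' : (1 <= N)%nat -> inrange N j = true -> inrange N j' = true ->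
  (p * Z.of_nat N + j = p' * Z.of_nat N + j')%Z -> p = p' /\ j = j'.
Proof.
  intros HN H1 H2 E. apply inrange_double in H1, H2.
  assert ((p - p') * Z.of_nat N = j' - j)%Z by lia.
  assert (p = p') by nia. subst; lia.
Qed.

Lemma alias_shift_inj N j : (1 <= N)%nat ->
  forall p p', (p * Z.of_nat N + j)%Z = (p' * Z.of_nat N + j)%Z -> p = p'.
Proof. intros; nia. Qed.

(* The residue classes [pN + j] of distinct indices [j] in range are disjoint. *)
Lemma SeriesZ_alias_sum_le N J G : (1 <= N)%nat -> NoDup J -> (forall j, In j J -> inrange N j = true) ->
  nonneg G -> ex_seriesZ G ->
  ex_seriesZ (fun p => sum_list (fun j => G (p * Z.of_nat N + j)%Z) J) /\
  SeriesZ (fun p => sum_list (fun j => G (p * Z.of_nat N + j)%Z) J) <= SeriesZ G.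
Proof.
  intros HN HJ HR HG SG. apply SeriesZ_bounded; [intros p; apply sum_list_nonneg; intros j; apply HG |].
  intros L HL.
  rewrite <- (sum_list_ext (fun p => sum_list G (map (fun j => (p * Z.of_nat N + j)%Z) J)))
    by (intros p; apply sum_list_map).
  rewrite <- sum_list_flat_map. apply sum_list_le_SeriesZ; auto.
  induction HL as [|p L Hp HL IH]; simpl; [constructor |].
  apply NoDup_app; auto.
  - apply NoDup_map_NoDup_ForallPairs; auto. intros x y Hx Hy E.
    apply (alias_index_inj N p p x y); auto.
  - intros z Hz1 Hz2. apply in_map_iff in Hz1 as [j [<- Hj]].
    apply in_flat_map in Hz2 as [p' [Hp' Hz2]]. apply in_map_iff in Hz2 as [j' [E Hj']].
    destruct (alias_index_inj N p p' j j'); auto. subst; contradiction.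
Qed.

Lemma SeriesZ_alias_weight_le s N j : 1 / 2 < s -> (1 <= N)%nat -> inrange N j = true ->
  ex_seriesZ (fun p => weight (- (2 * s)) (p * Z.of_nat N + j)%Z) /\
  SeriesZ (fun p => weight (- (2 * s)) (p * Z.of_nat N + j)%Z) <= zeta s * weight (- (2 * s)) j.
Proof.
  intros Hs HN Hr. unfold zeta. rewrite (Rmult_comm (SeriesZ _)), <- SeriesZ_scal.
  apply SeriesZ_le; [| apply ex_seriesZ_scal, ex_seriesZ_zeta, Hs].
  intros p; split; [left; apply weight_pos |]. unfold weight.
  rewrite Rpower_mult_distr by apply angle_pos.
  apply Rpower_le_base_nonpos; [apply Rmult_lt_0_compat; apply angle_pos | | lra].
  rewrite Rmult_comm; apply angle_alias; auto.
Qed.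

(* Cauchy-Schwarz on the aliasing sum, with weights [<pN + j>^(-s)] and [<pN + j>^s]. *)
Lemma alias_sq_le s N j a : 1 / 2 < s -> (1 <= N)%nat -> inrange N j = true ->
  nonneg a -> ex_seriesZ (hsq s a) ->
  ex_seriesZ (fun p => a (p * Z.of_nat N + j)%Z) /\
  SeriesZ (fun p => a (p * Z.of_nat N + j)%Z) ^ 2 <=
    zeta s * weight (- (2 * s)) j * SeriesZ (fun p => hsq s a (p * Z.of_nat N + j)%Z).
Proof.
  intros Hs HN Hr Ha Sa.
  set (idx := fun p => (p * Z.of_nat N + j)%Z).
  destruct (SeriesZ_alias_weight_le s N j Hs HN Hr) as [SW BW].
  destruct (SeriesZ_comp_inj (hsq s a) idx (alias_shift_inj N j HN) (hsq_nonneg s a) Sa) as [SH _].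
  assert (E : forall p, weight (- s) (idx p) * (weight s (idx p) * a (idx p)) = a (idx p))
    by (intros p; rewrite <- Rmult_assoc, weight_opp_mul; ring).
  assert (E1 : forall p, weight (- s) (idx p) ^ 2 = weight (- (2 * s)) (idx p))
    by (intros p; rewrite weight_sqr; f_equal; ring).
  assert (E2 : forall p, (weight s (idx p) * a (idx p)) ^ 2 = hsq s a (idx p))
    by (intros p; apply hsq_weight_mul).
  destruct (SeriesZ_Cauchy_Schwarz (fun p => weight (- s) (idx p)) (fun p => weight s (idx p) * a (idx p)))
    as [C D].
  - intros p; left; apply weight_pos.
  - intros p; apply Rmult_le_pos; [left; apply weight_pos | auto].
  - apply ex_seriesZ_ext with (2 := SW); intros p; symmetry; apply E1.
  - apply ex_seriesZ_ext with (2 := SH); intros p; symmetry; apply E2.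
  - rewrite (SeriesZ_ext _ _ E), (SeriesZ_ext _ _ E1), (SeriesZ_ext _ _ E2) in D.
    split; [exact (ex_seriesZ_ext _ _ E C) |].
    eapply Rle_trans; [exact D |]. apply Rmult_le_compat_r; [| exact BW].
    apply SeriesZ_nonneg; intros p; apply hsq_nonneg.
Qed.

Lemma hterm_nonneg s u : nonneg (hterm s u).
Proof. exact (hsq_nonneg s (fun k => Cmod (u k))). Qed.

Lemma Iop_Hs_bound s N w : 1 / 2 < s -> (1 <= N)%nat -> Hs s w ->
  Hs s (Iop N w) /\ SeriesZ (hterm s (Iop N w)) <= zeta s * SeriesZ (hterm s w).
Proof.
  intros Hs0 HN Hw.
  assert (HZ : 0 <= zeta s) by (pose proof (zeta_ge_1 s Hs0); lra).
  set (Y := fun j p => hterm s w (p * Z.of_nat N + j)%Z).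
  assert (SY : forall j, ex_seriesZ (Y j))
    by (intros j; exact (proj1 (SeriesZ_comp_inj _ _ (alias_shift_inj N j HN) (hterm_nonneg s w) Hw))).
  set (E := fun j => if inrange N j then zeta s * SeriesZ (Y j) else 0).
  assert (PW : forall j, 0 <= hterm s (Iop N w) j <= E j).
  { intros j. split; [apply hterm_nonneg |]. unfold E, Iop. rewrite hterm_weight.
    destruct (inrange N j) eqn:Hr; [| rewrite Cmod_0; simpl; lra].
    destruct (alias_sq_le s N j (fun k => Cmod (w k)) Hs0 HN Hr (fun k => Cmod_ge_0 _) Hw) as [Sa Ba].
    pose proof (Cmod_Zsum_le _ Sa) as Hz. pose proof (Cmod_ge_0 (Zsum (fun p => w (p * Z.of_nat N + j)%Z))).
    pose proof (weight_pos (2 * s) j) as Hwj. pose proof (weight_opp_mul (2 * s) j) as Hinv.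
    apply Rle_trans with (SeriesZ (fun p => Cmod (w (p * Z.of_nat N + j)%Z)) ^ 2 * weight (2 * s) j).
    - apply Rmult_le_compat_r; [lra | apply pow_incr; lra].
    - eapply Rle_trans; [apply Rmult_le_compat_r; [lra | exact Ba] |].
      right. change (SeriesZ (fun p => hsq s (fun k => Cmod (w k)) (p * Z.of_nat N + j)%Z))
        with (SeriesZ (Y j)).
      transitivity (zeta s * SeriesZ (Y j) * (weight (- (2 * s)) j * weight (2 * s) j));
        [ring | rewrite Hinv; ring]. }
  destruct (SeriesZ_bounded E (zeta s * SeriesZ (hterm s w))) as [SE BE].
  { intros j; unfold E; destruct (inrange N j); [| lra].
    apply Rmult_le_pos; [exact HZ | apply SeriesZ_nonneg; intros p; apply hterm_nonneg]. }
  { intros L HL. unfold E. rewrite (sum_list_filter (fun j => zeta s * SeriesZ (Y j))), sum_list_scal.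
    apply Rmult_le_compat_l; [exact HZ |].
    rewrite <- (proj2 (SeriesZ_sum_list Y _ SY)). unfold Y.
    apply SeriesZ_alias_sum_le; auto using NoDup_filter, hterm_nonneg.
    intros j Hj; apply filter_In in Hj; apply Hj. }
  destruct (SeriesZ_le _ _ PW SE) as [S B]. split; [exact S | lra].
Qed.

Lemma Iop_sub s N w w' : 1 / 2 < s -> (1 <= N)%nat -> Hs s w -> Hs s w' ->
  fsub (Iop N w) (Iop N w') = Iop N (fsub w w').
Proof.
  intros Hs0 HN Hw Hw'. apply functional_extensionality; intros j. unfold fsub, Iop.
  destruct (inrange N j) eqn:Hr; [| ring].
  symmetry; apply Zsum_minus.
  - exact (proj1 (alias_sq_le s N j (fun k => Cmod (w k)) Hs0 HN Hr (fun k => Cmod_ge_0 _) Hw)).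
  - exact (proj1 (alias_sq_le s N j (fun k => Cmod (w' k)) Hs0 HN Hr (fun k => Cmod_ge_0 _) Hw')).
Qed.

Lemma hnorm_SeriesZ s u : hnorm s u = sqrt (SeriesZ (hterm s u)).
Proof. reflexivity. Qed.

Lemma opnorm_le_of_bound s A B : 0 <= B ->
  (forall u, Hs s u -> Hs s (A u) /\ hnorm s (A u) <= B * hnorm s u) -> Rbar_le (opnorm s A) (Finite B).
Proof.
  intros HB H. unfold opnorm. apply Lub_Rbar_correct.
  intros r [u [Hu [Hp [-> | Hn]]]].
  - apply Rle_div_l; [exact Hp | apply H, Hu].
  - exfalso; apply Hn, H, Hu.
Qed.

Lemma opnorm_Mop_sub_le s Q c g g' : 1 / 2 < s -> 0 <= c -> Hs s g -> Hs s g' -> Hs s (fsub g g') ->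
  (forall w, Hs s w -> Hs s (Q w) /\ SeriesZ (hterm s (Q w)) <= c * SeriesZ (hterm s w)) ->
  (forall w w', Hs s w -> Hs s w' -> fsub (Q w) (Q w') = Q (fsub w w')) ->
  Rbar_le (opnorm s (opsub (fun u => Q (Mop g (Cplus_op u))) (fun u => Q (Mop g' (Cplus_op u)))))
          (Finite (sqrt (c * mult_const s) * hnorm s (fsub g g'))).
Proof.
  intros Hs0 Hc Hg Hg' Hh HQ HQsub.
  assert (HK : 0 <= mult_const s) by (left; apply mult_const_pos, Hs0).
  apply opnorm_le_of_bound; [apply Rmult_le_pos; apply sqrt_pos |].
  intros u Hu. destruct (Cplus_op_Hs_bound s u Hu) as [Hv Bv]. set (v := Cplus_op u) in *.
  assert (E : opsub (fun u => Q (Mop g (Cplus_op u))) (fun u => Q (Mop g' (Cplus_op u))) u =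
              Q (Mop (fsub g g') v)).
  { destruct (Mop_Hs_bound s g v Hs0 Hg Hv) as [Hgv _].
    destruct (Mop_Hs_bound s g' v Hs0 Hg' Hv) as [Hg'v _].
    unfold opsub; fold v. rewrite HQsub by assumption. f_equal; apply (Mop_sub_l s); auto. }
  rewrite E. destruct (Mop_Hs_bound s (fsub g g') v Hs0 Hh Hv) as [HM BM].
  destruct (HQ _ HM) as [HQM BQM]. split; [exact HQM |].
  pose proof (SeriesZ_nonneg _ (hterm_nonneg s (fsub g g'))) as Hh0.
  rewrite !hnorm_SeriesZ, <- (sqrt_mult_alt (c * mult_const s)) by (apply Rmult_le_pos; auto).
  rewrite <- sqrt_mult_alt by (apply Rmult_le_pos; [apply Rmult_le_pos |]; auto).
  apply sqrt_le_1_alt. eapply Rle_trans; [exact BQM |].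
  replace (c * mult_const s * SeriesZ (hterm s (fsub g g')) * SeriesZ (hterm s u))
    with (c * (mult_const s * SeriesZ (hterm s (fsub g g')) * SeriesZ (hterm s u))) by ring.
  apply Rmult_le_compat_l; [exact Hc |]. eapply Rle_trans; [exact BM |].
  apply Rmult_le_compat_l; [apply Rmult_le_pos; auto | exact Bv].
Qed.

Theorem lemmal (s : R) (g : fseq) :
  1 / 2 < s -> Hs s g ->
  exists Cs : R, 0 < Cs /\
    forall N M : nat, (1 <= N)%nat -> (1 <= M)%nat ->
      Rbar_le
        (opnorm s (opsub (fun u => Iop N (Mop g (Cplus_op u)))
                         (fun u => Iop N (Mop (Pop M g) (Cplus_op u)))))
        (Finite (Cs * hnorm s (fsub g (Pop M g))))
      /\
      Rbar_le
        (opnorm s (opsub (fun u => Pop N (Mop g (Cplus_op u)))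
                         (fun u => Pop N (Mop (Pop M g) (Cplus_op u)))))
        (Finite (Cs * hnorm s (fsub g (Pop M g)))).
Proof.
  intros Hs0 Hg.
  pose proof (zeta_ge_1 s Hs0) as Hz.
  pose proof (mult_const_pos s Hs0) as HK.
  exists (sqrt (zeta s * mult_const s)). split; [apply sqrt_lt_R0; nra |].
  intros N M HN _.
  destruct (Pop_Hs_bound s M g Hg) as [HPg _].
  assert (Hh : Hs s (fsub g (Pop M g))).
  { apply (Hs_dominated s _ g); [| exact Hg]. intros j; unfold fsub, Pop.
    destruct (inrange M j).
    - replace (Cminus (g j) (g j)) with (RtoC 0) by ring. rewrite Cmod_0; apply Cmod_ge_0.
    - replace (Cminus (g j) (RtoC 0)) with (g j) by ring. lra. }
  split; apply opnorm_Mop_sub_le; auto; try lra.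
  - intros w Hw; apply Iop_Hs_bound; auto.
  - intros w w' Hw Hw'; apply (Iop_sub s); auto.
  - intros w Hw. destruct (Pop_Hs_bound s N w Hw) as [H1 H2]. split; [exact H1 |].
    pose proof (SeriesZ_nonneg _ (hterm_nonneg s w)). nra.
  - intros w w' _ _; apply Pop_sub.
Qed.
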